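(* Let $\tau=\{<\}$ where $<$ is a binary relation symbol. There is a sentence $\varphi$ of $\mathcal L_{\omega,\omega}(\tau)$ such that $\vartheta(\varphi)$ is expressible by a theory of $\mathcal L_{\omega,\omega}(\tau)$ but is not expressible by any single sentence of $\mathcal L_{\omega,\omega}(\tau)$.
   Context: Models are nonempty; a submodel is a substructure (here: any nonempty subset with the induced relation). $\mathcal L_{\omega,\omega}(\tau)$ is ordinary first-order logic with equality. $\mathfrak A\vDash\vartheta(\varphi)$ iff some submodel of $\mathfrak A$ satisfies $\varphi$. $\vartheta(\varphi)$ is expressible by a theory $T$ (resp. a sentence $\chi$) if for every $\tau$-model $\mathfrak A$: $\mathfrak A\vDash\vartheta(\varphi)$ iff $\mathfrak A\vDash T$ (resp. $\mathfrak A\vDash\chi$). *)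

From Stdlib Require Import PeanoNat.

Inductive form : Type :=
| FLt  : nat -> nat -> form
| FEq  : nat -> nat -> form
| FBot : form
| FNeg : form -> form
| FAnd : form -> form -> form
| FOr  : form -> form -> form
| FImp : form -> form -> form
| FAll : nat -> form -> form
| FEx  : nat -> form -> form.

Fixpoint free (x : nat) (f : form) : Prop :=
  match f with
  | FLt i j | FEq i j => x = i \/ x = j
  | FBot => False
  | FNeg g => free x g
  | FAnd g h | FOr g h | FImp g h => free x g \/ free x h
  | FAll y g | FEx y g => x <> y /\ free x g
  end.

Definition sentence (f : form) : Prop := forall x, ~ free x f.

Record model : Type := Model {
  dom : Type;
  lt_rel : dom -> dom -> Prop;
  dom_inh : inhabited dom }.

Definition upd {A : Type} (v : nat -> A) (x : nat) (a : A) : nat -> A :=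
  fun y => if Nat.eqb y x then a else v y.

Fixpoint sat (M : model) (v : nat -> dom M) (f : form) : Prop :=
  match f with
  | FLt i j => lt_rel M (v i) (v j)
  | FEq i j => v i = v j
  | FBot => False
  | FNeg g => ~ sat M v g
  | FAnd g h => sat M v g /\ sat M v h
  | FOr g h => sat M v g \/ sat M v h
  | FImp g h => sat M v g -> sat M v h
  | FAll y g => forall a : dom M, sat M (upd v y a) g
  | FEx y g => exists a : dom M, sat M (upd v y a) g
  end.

(* M |= f  (for sentences the choice of assignment is irrelevant). *)
Definition models (M : model) (f : form) : Prop := forall v, sat M v f.

Definition sub_inh (M : model) (B : dom M -> Prop) (h : exists x, B x)
  : inhabited {x : dom M | B x} :=
  match h with ex_intro _ x hx => inhabits (exist _ x hx) end.

Definition submodel (M : model) (B : dom M -> Prop) (h : exists x, B x) : model :=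
  Model {x : dom M | B x}
        (fun a b => lt_rel M (proj1_sig a) (proj1_sig b))
        (sub_inh M B h).

Definition theta (phi : form) (M : model) : Prop :=
  exists (B : dom M -> Prop) (h : exists x, B x), models (submodel M B h) phi.

Definition expressible_by_theory (phi : form) (T : form -> Prop) : Prop :=
  (forall psi, T psi -> sentence psi) /\
  forall M : model, theta phi M <-> (forall psi, T psi -> models M psi).

Definition expressible_by_sentence (phi chi : form) : Prop :=
  sentence chi /\ forall M : model, theta phi M <-> models M chi.

(* Let phi say "not a strict linear order, or no greatest element, or no least element". A
   finite linear order has only finite linear suborders, each with both endpoints, so
   theta(phi) fails there; an infinite linear order has a suborder without least element, or
   one without greatest element (the successor chain above its least element), or, past the
   end of that chain, one without least element. Hence theta(phi) holds exactly in the
   structures that are not finite linear orders, which the theory "not a linear order with at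
   most n+1 elements" (n in N) expresses.
   No single sentence can: a sentence of quantifier depth k does not distinguish the chain of
   length 2^k from omega + omega*, by an Ehrenfeucht-Fraisse argument whose invariant is that
   matched points have the same signed distances once these are clamped to [-2^k, 2^k]. *)
From Stdlib Require Import ZArith Lia List Classical ProofIrrelevance.

Lemma sat_ext (M : model) (f : form) :
  forall v v' : nat -> dom M,
  (forall x, free x f -> v x = v' x) -> (sat M v f <-> sat M v' f).
Proof.
  induction f; intros v v' Hv; cbn [sat free] in *.
  - rewrite (Hv n), (Hv n0); auto; tauto.
  - rewrite (Hv n), (Hv n0); auto; tauto.
  - tauto.
  - rewrite (IHf v v'); auto; tauto.
  - rewrite (IHf1 v v'), (IHf2 v v'); auto; tauto.
  - rewrite (IHf1 v v'), (IHf2 v v'); auto; tauto.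
  - rewrite (IHf1 v v'), (IHf2 v v'); auto; tauto.
  - split; intros H a;
      [rewrite <- (IHf (upd v n a) (upd v' n a)) | rewrite (IHf (upd v n a) (upd v' n a))]; auto;
      intros x Hx; unfold upd; destruct (Nat.eqb x n) eqn:E; auto;
      apply Hv; split; auto; apply Nat.eqb_neq; auto.
  - split; intros [a H]; exists a;
      [rewrite <- (IHf (upd v n a) (upd v' n a)) | rewrite (IHf (upd v n a) (upd v' n a))]; auto;
      intros x Hx; unfold upd; destruct (Nat.eqb x n) eqn:E; auto;
      apply Hv; split; auto; apply Nat.eqb_neq; auto.
Qed.

Lemma models_of_sentence (M : model) (f : form) (v : nat -> dom M) :
  sentence f -> sat M v f -> models M f.
Proof. intros Hs H v'. apply (sat_ext M f v v'); auto. intros x Hx; destruct (Hs x Hx). Qed.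

Definition linear_order (M : model) : Prop :=
  (forall a, ~ lt_rel M a a) /\
  (forall a b c, lt_rel M a b -> lt_rel M b c -> lt_rel M a c) /\
  (forall a b, lt_rel M a b \/ a = b \/ lt_rel M b a).

Definition linear_order_ax : form :=
  FAnd (FAll 0 (FNeg (FLt 0 0)))
   (FAnd (FAll 0 (FAll 1 (FAll 2 (FImp (FAnd (FLt 0 1) (FLt 1 2)) (FLt 0 2)))))
         (FAll 0 (FAll 1 (FOr (FLt 0 1) (FOr (FEq 0 1) (FLt 1 0)))))).
Definition no_max_ax : form := FAll 0 (FEx 1 (FLt 0 1)).
Definition no_min_ax : form := FAll 0 (FEx 1 (FLt 1 0)).
Definition nonlinear_or_unbounded : form :=
  FOr (FNeg linear_order_ax) (FOr no_max_ax no_min_ax).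

Lemma sat_linear_order_ax M v : sat M v linear_order_ax <-> linear_order M.
Proof. unfold linear_order; cbn [sat linear_order_ax]; unfold upd; cbn. firstorder. Qed.

Lemma sat_nonlinear_or_unbounded M v :
  sat M v nonlinear_or_unbounded <->
  ~ linear_order M \/ (forall a, exists b, lt_rel M a b) \/ (forall a, exists b, lt_rel M b a).
Proof. cbn [sat nonlinear_or_unbounded]. rewrite sat_linear_order_ax. unfold upd; cbn. tauto. Qed.

Lemma sentence_nonlinear_or_unbounded : sentence nonlinear_or_unbounded.
Proof. intros x H. cbn in H. lia. Qed.

Lemma linear_order_submodel M B h : linear_order M -> linear_order (submodel M B h).
Proof.
  intros [Irr [Tr Tot]]; split; [|split]; cbn.
  - intros a; apply Irr.
  - intros a b c; apply Tr.
  - intros [a Ha] [b Hb]; cbn. destruct (Tot a b) as [?|[<-|?]]; auto.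
    right; left. f_equal. apply proof_irrelevance.
Qed.

Lemma linear_order_of_full_submodel M B h :
  (forall x, B x) -> linear_order (submodel M B h) -> linear_order M.
Proof.
  intros HB [Irr [Tr Tot]]; split; [|split].
  - intros a; apply (Irr (exist _ a (HB a))).
  - intros a b c; apply (Tr (exist _ a (HB a)) (exist _ b (HB b)) (exist _ c (HB c))).
  - intros a b. destruct (Tot (exist _ a (HB a)) (exist _ b (HB b))) as [?|[E|?]]; auto.
    right; left. exact (f_equal (@proj1_sig _ _) E).
Qed.

Section Successors.
Variable M : model.
Notation lt := (lt_rel M).

Definition is_max (a : dom M) := forall z, ~ lt a z.
Definition is_min (a : dom M) := forall z, ~ lt z a.
Definition is_succ (a b : dom M) := lt a b /\ forall z, ~ (lt a z /\ lt z b).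

Fixpoint max_within (a : dom M) (m : nat) : Prop :=
  match m with
  | 0 => is_max a
  | S m => is_max a \/ exists b, is_succ a b /\ max_within b m
  end.

Fixpoint succ_chain (a0 c : dom M) (n : nat) : Prop :=
  match n with
  | 0 => c = a0
  | S n => exists b, succ_chain a0 b n /\ is_succ b c
  end.

Lemma succ_chain_max_within a0 n : forall c m,
  succ_chain a0 c n -> max_within c m -> max_within a0 (n + m).
Proof.
  induction n as [|n IH]; intros c m Hp Hw; cbn in Hp.
  - subst; auto.
  - destruct Hp as [b [Hp Hs]]. replace (S n + m) with (n + S m) by lia.
    apply (IH b); auto. cbn. right. eauto.
Qed.

Hypothesis HM : linear_order M.

Lemma max_within_greatest m : forall a, max_within a m ->
  forall B : dom M -> Prop, (exists y, B y) -> (forall y, B y -> y = a \/ lt a y) ->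
  exists c, B c /\ forall y, B y -> ~ lt c y.
Proof.
  destruct HM as [Irr [Tr Tot]].
  induction m as [|m IH]; intros a Hw B [y0 Hy0] HB.
  - exists y0; split; auto. intros y Hy.
    destruct (HB y0 Hy0) as [->|H]; [apply Hw|exfalso; apply (Hw y0 H)].
  - destruct Hw as [Hm|[b [[Hab Hs] Hw]]].
    { exists y0; split; auto. intros y Hy.
      destruct (HB y0 Hy0) as [->|H]; [apply Hm|exfalso; apply (Hm y0 H)]. }
    destruct (classic (exists y, B y /\ (y = b \/ lt b y))) as [E|NE].
    + destruct (IH b Hw (fun y => B y /\ (y = b \/ lt b y)) E) as [c [[Bc Hc] Mc]]; [tauto|].
      exists c; split; auto. intros y Hy Hcy.
      destruct (classic (y = b \/ lt b y)) as [Hb|Hb]; [apply (Mc y); auto|].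
      destruct (HB y Hy) as [->|Hay].
      * destruct Hc as [->|Hbc]; apply (Irr a); eauto.
      * destruct (Tot y b) as [?|[?|?]]; [apply (Hs y); auto|tauto|tauto].
    + assert (Ea : forall y, B y -> y = a).
      { intros y Hy. destruct (HB y Hy) as [->|Hay]; auto. exfalso.
        destruct (Tot y b) as [?|[?|?]]; [apply (Hs y); auto|apply NE; eauto|apply NE; eauto]. }
      exists y0; split; auto. rewrite (Ea y0 Hy0). intros y Hy. rewrite (Ea y Hy). apply Irr.
Qed.

Lemma max_within_least m : forall a, max_within a m ->
  forall B : dom M -> Prop, (exists y, B y) -> (forall y, B y -> y = a \/ lt a y) ->
  exists c, B c /\ forall y, B y -> ~ lt y c.
Proof.
  destruct HM as [Irr [Tr Tot]].
  induction m as [|m IH]; intros a Hw B [y0 Hy0] HB.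
  - exists y0; split; auto. intros y Hy.
    destruct (HB y0 Hy0) as [->|H]; [|exfalso; apply (Hw y0 H)].
    destruct (HB y Hy) as [->|H']; [apply Irr|exfalso; apply (Hw y H')].
  - destruct (classic (B a)) as [Ba|NBa].
    { exists a; split; auto. intros y Hy Hya.
      destruct (HB y Hy) as [->|H]; apply (Irr a); eauto. }
    destruct Hw as [Hm|[b [[Hab Hs] Hw]]].
    + exfalso. destruct (HB y0 Hy0) as [->|H]; [tauto|apply (Hm y0 H)].
    + apply (IH b Hw B); [eauto|]. intros y Hy. destruct (HB y Hy) as [->|Hay]; [tauto|].
      destruct (Tot y b) as [?|[?|?]]; [exfalso; apply (Hs y); auto|auto|auto].
Qed.
End Successors.

(* In [max_within_form i m] the element under consideration is variable [S i]; variable [0] is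
   scratch for the inner universal quantifiers. *)
Definition max_form (i : nat) := FAll 0 (FNeg (FLt (S i) 0)).
Definition min_form (i : nat) := FAll 0 (FNeg (FLt 0 (S i))).
Definition succ_form (i j : nat) :=
  FAnd (FLt (S i) (S j)) (FAll 0 (FNeg (FAnd (FLt (S i) 0) (FLt 0 (S j))))).
Fixpoint max_within_form (i m : nat) : form :=
  match m with
  | 0 => max_form i
  | S m => FOr (max_form i) (FEx (S (S i)) (FAnd (succ_form i (S i)) (max_within_form (S i) m)))
  end.

Definition small_linear_order (M : model) (n : nat) : Prop :=
  linear_order M /\ exists a, is_min M a /\ max_within M a n.

Definition not_small_linear_order_form (n : nat) : form :=
  FOr (FNeg linear_order_ax) (FNeg (FEx 1 (FAnd (min_form 0) (max_within_form 0 n)))).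

Definition not_finite_linear_order : form -> Prop :=
  fun f => exists n, f = not_small_linear_order_form n.

Lemma sat_max_within_form M m : forall i v,
  sat M v (max_within_form i m) <-> max_within M (v (S i)) m.
Proof.
  induction m as [|m IH]; intros i v; cbn [max_within_form max_within sat max_form succ_form].
  - unfold is_max, upd; cbn. firstorder.
  - setoid_rewrite IH. unfold is_max, is_succ, upd; cbn.
    rewrite Nat.eqb_refl, (proj2 (Nat.eqb_neq i (S i))) by lia. firstorder.
Qed.

Lemma sat_not_small_linear_order_form M v n :
  sat M v (not_small_linear_order_form n) <-> ~ small_linear_order M n.
Proof.
  unfold small_linear_order; cbn [not_small_linear_order_form sat min_form].
  rewrite sat_linear_order_ax. setoid_rewrite sat_max_within_form.
  unfold is_min, upd; cbn. destruct (classic (linear_order M)); tauto.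
Qed.

Lemma free_max_within_form m : forall i x, free x (max_within_form i m) -> x = S i.
Proof.
  induction m as [|m IH]; intros i x H; cbn in H.
  - lia.
  - destruct H as [H|[H1 [[H2|H2]|H2]]]; try lia. apply IH in H2; lia.
Qed.

Lemma sentence_not_small_linear_order_form n : sentence (not_small_linear_order_form n).
Proof.
  intros x H. cbn [not_small_linear_order_form free] in H.
  destruct H as [H|[Hx [H|H]]]; [cbn in H; lia|cbn in H; lia|].
  apply free_max_within_form in H; lia.
Qed.

Notation theta_phi := (theta nonlinear_or_unbounded).

Lemma theta_phi_not_small M n : theta_phi M -> ~ small_linear_order M n.
Proof.
  intros [B [[x0 Bx0] HB]] [HL [a0 [Ha0 Hw]]].
  assert (Hall : forall y, B y -> y = a0 \/ lt_rel M a0 y).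
  { intros y _. destruct HL as [_ [_ Tot]].
    destruct (Tot a0 y) as [?|[?|?]]; auto. exfalso; eapply Ha0; eauto. }
  specialize (HB (fun _ => exist _ x0 Bx0)).
  apply sat_nonlinear_or_unbounded in HB as [HB|[HB|HB]].
  - apply HB, linear_order_submodel, HL.
  - destruct (max_within_greatest M HL n a0 Hw B (ex_intro _ x0 Bx0) Hall) as [c [Bc Hc]].
    destruct (HB (exist _ c Bc)) as [[d Bd] Hcd]. exact (Hc d Bd Hcd).
  - destruct (max_within_least M HL n a0 Hw B (ex_intro _ x0 Bx0) Hall) as [c [Bc Hc]].
    destruct (HB (exist _ c Bc)) as [[d Bd] Hdc]. exact (Hc d Bd Hdc).
Qed.

Lemma theta_phi_of_nonlinear M : ~ linear_order M -> theta_phi M.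
Proof.
  intros HL. destruct (dom_inh M) as [x0].
  exists (fun _ => True), (ex_intro _ x0 I). intros v. apply sat_nonlinear_or_unbounded.
  left. intros HS. apply HL. exact (linear_order_of_full_submodel M _ _ (fun _ => I) HS).
Qed.

Lemma theta_phi_of_no_max_subset M (B : dom M -> Prop) :
  (exists x, B x) -> (forall c, B c -> exists d, B d /\ lt_rel M c d) -> theta_phi M.
Proof.
  intros hB HB. exists B, hB. intros v. apply sat_nonlinear_or_unbounded. right; left.
  intros [c Bc]. destruct (HB c Bc) as [d [Bd Hcd]]. now exists (exist _ d Bd).
Qed.

Lemma theta_phi_of_no_min_subset M (B : dom M -> Prop) :
  (exists x, B x) -> (forall c, B c -> exists d, B d /\ lt_rel M d c) -> theta_phi M.
Proof.
  intros hB HB. exists B, hB. intros v. apply sat_nonlinear_or_unbounded. right; right.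
  intros [c Bc]. destruct (HB c Bc) as [d [Bd Hdc]]. now exists (exist _ d Bd).
Qed.

Lemma theta_phi_of_not_small M : (forall n, ~ small_linear_order M n) -> theta_phi M.
Proof.
  intros Hbig.
  destruct (classic (linear_order M)) as [HL|HL]; [|now apply theta_phi_of_nonlinear].
  destruct (classic (exists a, is_min M a)) as [[a0 Ha0]|Hnomin].
  2:{ destruct (dom_inh M) as [x0].
      apply (theta_phi_of_no_min_subset M (fun _ => True)); [now exists x0|].
      intros c _. apply NNPP. intros Hc. apply Hnomin. exists c. intros z Hz. eauto. }
  set (reach := fun c => exists n, succ_chain M a0 c n).
  destruct (classic (forall c, reach c -> exists d, reach d /\ lt_rel M c d)) as [Hr|Hr].
  { apply (theta_phi_of_no_max_subset M reach); [exists a0, 0; reflexivity|exact Hr]. }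
  apply not_all_ex_not in Hr as [c Hc].
  apply imply_to_and in Hc as [[n Hn] Hc].
  assert (Hdense : forall y, lt_rel M c y -> exists z, lt_rel M c z /\ lt_rel M z y).
  { intros y Hy. apply NNPP. intros Hno. apply Hc. exists y. split; auto.
    exists (S n), c. split; auto. split; auto. intros z Hz. apply Hno. eauto. }
  destruct (classic (is_max M c)) as [Hmax|Hmax].
  { exfalso. apply (Hbig (n + 0)). split; auto. exists a0. split; auto.
    exact (succ_chain_max_within M a0 n c 0 Hn Hmax). }
  apply (theta_phi_of_no_min_subset M (lt_rel M c)).
  - apply NNPP. intros H. apply Hmax. intros z Hz. apply H; eauto.
  - intros y Hy. destruct (Hdense y Hy) as [z [Hz Hzy]]. eauto.
Qed.

Lemma theta_phi_iff_not_finite M :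
  theta_phi M <-> (forall f, not_finite_linear_order f -> models M f).
Proof.
  split.
  - intros Hth f [n ->] v. apply sat_not_small_linear_order_form, theta_phi_not_small, Hth.
  - intros HT. destruct (dom_inh M) as [x0]. apply theta_phi_of_not_small. intros n.
    apply (sat_not_small_linear_order_form M (fun _ => x0)), HT. now exists n.
Qed.

Section Points.
Local Open Scope Z_scope.

Definition point := (bool * Z)%type.
Definition point_lt (p q : point) : Prop :=
  (fst p = false /\ fst q = true) \/ (fst p = fst q /\ snd p < snd q).

Definition clamp (K x : Z) := Z.max (-K) (Z.min K x).

(* Signed distance from [p] to [q], clamped to [[-K, K]]; points in different copies of Z are
   infinitely far apart. *)
Definition cdist (K : Z) (p q : point) : Z :=
  if Bool.eqb (fst p) (fst q) then clamp K (snd q - snd p)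
  else if fst p then -K else K.

Ltac point_cases :=
  repeat match goal with
  | p : point |- _ => let a := fresh "s" in let b := fresh "z" in destruct p as [a b]
  end;
  unfold cdist, point_lt, clamp in *; cbn [fst snd Bool.eqb] in *;
  repeat match goal with
  | b : bool |- _ => destruct b
  end; cbn [fst snd Bool.eqb] in *;
  repeat match goal with
  | H : (_,_) = (_,_) |- _ => injection H; clear H; intros
  | H : _ \/ _ |- _ => destruct H
  | H : _ /\ _ |- _ => destruct H
  | H : false = true |- _ => discriminate H
  | H : true = false |- _ => discriminate H
  end; try discriminate.

Lemma point_lt_irrefl p : ~ point_lt p p.
Proof. intros H. point_cases; lia. Qed.

Lemma point_lt_trans p q r : point_lt p q -> point_lt q r -> point_lt p r.
Proof. intros. point_cases; auto; right; split; auto; lia. Qed.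

Lemma point_lt_total p q : point_lt p q \/ p = q \/ point_lt q p.
Proof.
  destruct p as [[|] z], q as [[|] z']; unfold point_lt; cbn [fst snd]; try tauto;
    destruct (Z.lt_trichotomy z z') as [?|[->|?]]; tauto.
Qed.

Variable K : Z.
Hypothesis K_ge1 : 1 <= K.

Lemma cdist_shift s z d r : -K <= d <= K ->
  cdist K (s, z + d) r = clamp K (cdist (2*K) (s, z) r - d).
Proof. intros. point_cases; lia. Qed.

Lemma cdist_clamp p q : cdist K p q = clamp K (cdist (2*K) p q).
Proof.
  destruct p as [s z]. rewrite <- (Z.add_0_r z) at 1. rewrite cdist_shift by lia.
  f_equal; lia.
Qed.

Lemma cdist_gt0 p q : point_lt p q <-> 0 < cdist K p q.
Proof. point_cases; split; intros; point_cases; try lia; auto. Qed.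

Lemma cdist_eq0 p q : p = q <-> cdist K p q = 0.
Proof. point_cases; split; intros; point_cases; try lia; try f_equal; lia. Qed.

Lemma cdist_refl p : cdist K p p = 0.
Proof. now apply cdist_eq0. Qed.

Lemma cdist_opp p q : cdist K q p = - cdist K p q.
Proof. point_cases; lia. Qed.

Lemma cdist_bound p q : -K <= cdist K p q <= K.
Proof. point_cases; lia. Qed.

Lemma cdist_ge0 p q : point_lt p q \/ p = q -> 0 <= cdist K p q.
Proof. intros [H|<-]; [apply cdist_gt0 in H; lia|rewrite cdist_refl; lia]. Qed.

Lemma cdist_antimono_l r p a : point_lt r p \/ r = p -> cdist K p a <= cdist K r a.
Proof. intros. point_cases; lia. Qed.

Lemma cdist_mono_r a q r : point_lt q r \/ q = r -> cdist K a q <= cdist K a r.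
Proof. intros. point_cases; lia. Qed.

Lemma cdist_far p a q : point_lt p a -> point_lt a q -> cdist K p a = K -> cdist K a q = K ->
  cdist (2*K) p q = 2*K.
Proof. intros. point_cases; lia. Qed.

Lemma cdist_near_l p a : point_lt p a -> cdist K p a < K -> a = (fst p, snd p + cdist K p a).
Proof. intros. point_cases; try lia; f_equal; lia. Qed.

Lemma cdist_near_r a q : point_lt a q -> cdist K a q < K -> a = (fst q, snd q + - cdist K a q).
Proof. intros. point_cases; try lia; f_equal; lia. Qed.

End Points.

Lemma list_greatest {A B : Type} (R : B -> B -> Prop) (key : A -> B) (P : B -> Prop) (L : list A) :
  (forall x y z, R x y -> R y z -> R x z) -> (forall x y, R x y \/ x = y \/ R y x) ->
  (exists x, In x L /\ P (key x)) ->
  exists x, In x L /\ P (key x) /\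
    forall y, In y L -> P (key y) -> R (key y) (key x) \/ key y = key x.
Proof.
  intros Tr Tot. induction L as [|c L IH]; intros [x [Hx Px]]; [destruct Hx|].
  destruct (classic (exists x, In x L /\ P (key x))) as [E|NE].
  - destruct (IH E) as [m [Hm [Pm Mm]]].
    destruct (classic (P (key c))) as [Pc|NPc].
    + destruct (Tot (key c) (key m)) as [h|[h|h]].
      1,2: exists m; split; [right; auto|split; auto]; intros y [<-|Hy] Py; auto.
      exists c; split; [left; auto|split; auto]. intros y [<-|Hy] Py; auto.
      left. destruct (Mm y Hy Py) as [Hym|Hym]; [eauto|now rewrite Hym].
    + exists m; split; [right; auto|split; auto]. intros y [<-|Hy] Py; auto. contradiction.
  - destruct Hx as [<-|Hx]; [|exfalso; apply NE; eauto].
    exists c; split; [left; auto|split; auto]. intros y [<-|Hy] Py; auto.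
    exfalso; apply NE; eauto.
Qed.

Section Extension.
Local Open Scope Z_scope.

(* [L] matches points of two orders; the matching is a partial isomorphism "up to distance [K]". *)
Definition cdist_preserving (K : Z) (L : list (point * point)) : Prop :=
  forall x y, In x L -> In y L -> cdist K (fst x) (fst y) = cdist K (snd x) (snd y).

Variable K : Z.
Hypothesis K_ge1 : 1 <= K.

Lemma cdist_preserving_add L a b L' : cdist_preserving (2*K) L ->
  (forall x, In x L -> cdist K a (fst x) = cdist K b (snd x)) ->
  (forall x, In x L' -> In x L \/ x = (a, b)) -> cdist_preserving K L'.
Proof.
  intros HL Hab HL' x y Hx Hy.
  destruct (HL' x Hx) as [Ix| ->]; destruct (HL' y Hy) as [Iy| ->]; cbn [fst snd].
  - rewrite (cdist_clamp K K_ge1 (fst x)), (cdist_clamp K K_ge1 (snd x)). f_equal. auto.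
  - rewrite (cdist_opp K K_ge1 a), (cdist_opp K K_ge1 b). f_equal. auto.
  - auto.
  - rewrite !cdist_refl by lia. reflexivity.
Qed.

(* A new point [a] strictly between its neighbours [p1] and [q1] in [L]: if it is close to one
   of them, copy that offset to the matching neighbour; if it is far from both, the neighbours
   are at least [2K] apart, so a point at distance [K] above [p2] works. *)
Lemma cdist_extend_between L a p1 p2 q1 q2 :
  cdist_preserving (2*K) L -> In (p1, p2) L -> In (q1, q2) L ->
  point_lt p1 a -> point_lt a q1 ->
  (forall y, In y L -> (point_lt (fst y) p1 \/ fst y = p1) \/ (point_lt q1 (fst y) \/ q1 = fst y)) ->
  exists b, forall x, In x L -> cdist K a (fst x) = cdist K b (snd x).
Proof.
  intros HL Hp Hq Hpa Haq Hside.
  assert (H2K : 1 <= 2*K) by lia.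
  destruct (Z.lt_ge_cases (cdist K p1 a) K) as [Np|Fp].
  { pose proof (cdist_bound K K_ge1 p1 a). apply (cdist_gt0 K K_ge1) in Hpa as Hd.
    exists (fst p2, snd p2 + cdist K p1 a). intros y Hy.
    rewrite (cdist_near_l K K_ge1 p1 a Hpa Np) at 1. destruct p1 as [s1 z1]; cbn [fst snd].
    rewrite !cdist_shift by lia. do 2 f_equal. apply (HL (s1, z1, p2) y); auto. }
  destruct (Z.lt_ge_cases (cdist K a q1) K) as [Nq|Fq].
  { pose proof (cdist_bound K K_ge1 a q1). apply (cdist_gt0 K K_ge1) in Haq as Hd.
    exists (fst q2, snd q2 + - cdist K a q1). intros y Hy.
    rewrite (cdist_near_r K K_ge1 a q1 Haq Nq) at 1. destruct q1 as [s1 z1]; cbn [fst snd].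
    rewrite !cdist_shift by lia. do 2 f_equal. apply (HL (s1, z1, q2) y); auto. }
  pose proof (cdist_bound K K_ge1 p1 a). pose proof (cdist_bound K K_ge1 a q1).
  assert (Fpq : cdist (2*K) p1 q1 = 2*K) by (apply (cdist_far K K_ge1) with a; auto; lia).
  exists (fst p2, snd p2 + K). intros y Hy.
  destruct p2 as [s2 z2]; cbn [fst snd]. rewrite cdist_shift by lia.
  pose proof (HL _ _ Hp Hy) as E; cbn [fst snd] in E; rewrite <- E. unfold clamp.
  destruct (Hside y Hy) as [Hl|Hr].
  - pose proof (cdist_antimono_l K K_ge1 (fst y) p1 a Hl).
    pose proof (cdist_bound K K_ge1 (fst y) a).
    pose proof (cdist_ge0 (2*K) H2K (fst y) p1 Hl).
    pose proof (cdist_opp (2*K) H2K (fst y) p1).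
    rewrite (cdist_opp K K_ge1). lia.
  - pose proof (cdist_mono_r K K_ge1 a q1 (fst y) Hr).
    pose proof (cdist_bound K K_ge1 a (fst y)).
    pose proof (cdist_mono_r (2*K) H2K p1 q1 (fst y) Hr).
    pose proof (cdist_bound (2*K) H2K p1 (fst y)). lia.
Qed.

Lemma cdist_extend_forth L lo1 lo2 hi1 hi2 a :
  cdist_preserving (2*K) L -> In (lo1, lo2) L -> In (hi1, hi2) L ->
  point_lt lo1 a -> point_lt a hi1 ->
  exists b, point_lt lo2 b /\ point_lt b hi2 /\
    forall x, In x L -> cdist K a (fst x) = cdist K b (snd x).
Proof.
  intros HL Hlo Hhi Hlo1 Hhi1.
  enough (exists b, forall x, In x L -> cdist K a (fst x) = cdist K b (snd x)) as [b Hb].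
  { exists b. split; [|split]; auto; apply (cdist_gt0 K K_ge1).
    - pose proof (Hb _ Hlo) as E; cbn [fst snd] in E.
      rewrite (cdist_opp K K_ge1 b), <- E, (cdist_opp K K_ge1 lo1).
      apply (cdist_gt0 K K_ge1) in Hlo1; lia.
    - pose proof (Hb _ Hhi) as E; cbn [fst snd] in E. rewrite <- E. now apply (cdist_gt0 K K_ge1). }
  destruct (classic (exists x, In x L /\ fst x = a)) as [[[x1 x2] [Hx Ex]]|Hnew].
  { cbn [fst] in Ex; subst x1. exists x2. intros y Hy.
    rewrite (cdist_clamp K K_ge1 a), (cdist_clamp K K_ge1 x2). f_equal. apply (HL (a, x2) y); auto. }
  destruct (list_greatest point_lt fst (fun t => point_lt t a) L point_lt_trans point_lt_total)
    as [[p1 p2] [Hp [Hpa Hpmax]]]; [exists (lo1, lo2); auto|].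
  destruct (list_greatest (fun x y => point_lt y x) fst (fun t => point_lt a t) L
    (fun x y z Hxy Hyz => point_lt_trans z y x Hyz Hxy)
    (fun x y => ltac:(destruct (point_lt_total x y); tauto)))
    as [[q1 q2] [Hq [Haq Hqmin]]]; [exists (hi1, hi2); auto|].
  apply (cdist_extend_between L a p1 p2 q1 q2); auto.
  intros y Hy. destruct (point_lt_total (fst y) a) as [h|[h|h]].
  - left; exact (Hpmax y Hy h).
  - exfalso; apply Hnew; eauto.
  - right. destruct (Hqmin y Hy h); auto.
Qed.
End Extension.

Definition swap_pair (x : point * point) : point * point := (snd x, fst x).

Lemma cdist_preserving_swap K L : cdist_preserving K L -> cdist_preserving K (map swap_pair L).
Proof.
  intros HL x y Hx Hy.
  apply in_map_iff in Hx as [x' [<- Hx]]. apply in_map_iff in Hy as [y' [<- Hy]].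
  cbn. symmetry. auto.
Qed.

Lemma cdist_extend_back K L lo1 lo2 hi1 hi2 b : (1 <= K)%Z ->
  cdist_preserving (2*K) L -> In (lo1, lo2) L -> In (hi1, hi2) L ->
  point_lt lo2 b -> point_lt b hi2 ->
  exists a, point_lt lo1 a /\ point_lt a hi1 /\
    forall x, In x L -> cdist K a (fst x) = cdist K b (snd x).
Proof.
  intros HK HL Hlo Hhi Hlo2 Hhi2.
  destruct (cdist_extend_forth K HK (map swap_pair L) lo2 lo1 hi2 hi1 b) as [a [Ha1 [Ha2 Ha]]];
    auto using cdist_preserving_swap.
  - exact (in_map swap_pair _ _ Hlo).
  - exact (in_map swap_pair _ _ Hhi).
  - exists a. split; [|split]; auto. intros x Hx. symmetry. apply (Ha (swap_pair x)), in_map, Hx.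
Qed.

Definition interval (lo hi : point) (H : inhabited {p : point | point_lt lo p /\ point_lt p hi})
  : model :=
  Model {p : point | point_lt lo p /\ point_lt p hi} (fun a b => point_lt (proj1_sig a) (proj1_sig b)) H.

Lemma interval_eq (lo hi : point) (a b : {p : point | point_lt lo p /\ point_lt p hi}) :
  a = b <-> proj1_sig a = proj1_sig b.
Proof.
  split; [now intros ->|]. destruct a, b; cbn; intros ->; f_equal; apply proof_irrelevance.
Qed.

Lemma linear_order_interval lo hi H : linear_order (interval lo hi H).
Proof.
  split; [|split]; cbn.
  - intros a; apply point_lt_irrefl.
  - intros a b c; apply point_lt_trans.
  - intros a b. destruct (point_lt_total (proj1_sig a) (proj1_sig b)) as [?|[E|?]]; auto.
    right; left. now apply interval_eq.
Qed.

Fixpoint vars (f : form) : list nat :=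
  match f with
  | FLt i j | FEq i j => i :: j :: nil
  | FBot => nil
  | FNeg g => vars g
  | FAnd g h | FOr g h | FImp g h => vars g ++ vars h
  | FAll y g | FEx y g => y :: vars g
  end.

Fixpoint qdepth (f : form) : nat :=
  match f with
  | FLt _ _ | FEq _ _ | FBot => 0
  | FNeg g => qdepth g
  | FAnd g h | FOr g h | FImp g h => Nat.max (qdepth g) (qdepth h)
  | FAll _ g | FEx _ g => S (qdepth g)
  end.

Definition ef_bound (k : nat) : Z := (2 ^ Z.of_nat k)%Z.

Lemma ef_bound_ge1 k : (1 <= ef_bound k)%Z.
Proof. unfold ef_bound. pose proof (Z.pow_pos_nonneg 2 (Z.of_nat k)). lia. Qed.

Lemma ef_bound_S k : ef_bound (S k) = (2 * ef_bound k)%Z.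
Proof. unfold ef_bound. rewrite Nat2Z.inj_succ, Z.pow_succ_r by lia. reflexivity. Qed.

Section EhrenfeuchtFraisse.
Variables (lo1 hi1 lo2 hi2 : point).
Variables (H1 : inhabited {p : point | point_lt lo1 p /\ point_lt p hi1})
          (H2 : inhabited {p : point | point_lt lo2 p /\ point_lt p hi2}).
Let M1 := interval lo1 hi1 H1.
Let M2 := interval lo2 hi2 H2.
Variable xs : list nat.

Definition ef_pairs (v : nat -> dom M1) (w : nat -> dom M2) : list (point * point) :=
  (lo1, lo2) :: (hi1, hi2) :: map (fun i => (proj1_sig (v i), proj1_sig (w i))) xs.

Definition ef_related (k : nat) v w := cdist_preserving (ef_bound k) (ef_pairs v w).

Lemma ef_pairs_upd v w y (a : dom M1) (b : dom M2) x :
  In x (ef_pairs (upd v y a) (upd w y b)) -> In x (ef_pairs v w) \/ x = (proj1_sig a, proj1_sig b).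
Proof.
  unfold ef_pairs. intros [H|[H|H]]; [left; left; auto|left; right; left; auto|].
  apply in_map_iff in H as [i [<- Hi]]. unfold upd. destruct (Nat.eqb i y).
  - right; auto.
  - left; right; right. apply in_map_iff. exists i; auto.
Qed.

Lemma ef_related_forth k v w y (a : dom M1) :
  ef_related (S k) v w -> exists b, ef_related k (upd v y a) (upd w y b).
Proof.
  unfold ef_related. rewrite ef_bound_S. intros HR.
  destruct a as [a [Ha1 Ha2]].
  destruct (cdist_extend_forth (ef_bound k) (ef_bound_ge1 k) (ef_pairs v w) lo1 lo2 hi1 hi2 a)
    as [b [Hb1 [Hb2 Hb]]]; cbn; auto.
  exists (exist _ b (conj Hb1 Hb2)).
  apply (cdist_preserving_add _ (ef_bound_ge1 k) _ _ _ _ HR Hb), ef_pairs_upd.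
Qed.

Lemma ef_related_back k v w y (b : dom M2) :
  ef_related (S k) v w -> exists a, ef_related k (upd v y a) (upd w y b).
Proof.
  unfold ef_related. rewrite ef_bound_S. intros HR.
  destruct b as [b [Hb1 Hb2]].
  destruct (cdist_extend_back (ef_bound k) (ef_pairs v w) lo1 lo2 hi1 hi2 b (ef_bound_ge1 k))
    as [a [Ha1 [Ha2 Ha]]]; cbn; auto.
  exists (exist _ a (conj Ha1 Ha2)).
  apply (cdist_preserving_add _ (ef_bound_ge1 k) _ _ _ _ HR Ha), ef_pairs_upd.
Qed.

Lemma ef_related_cdist k v w i j : ef_related k v w -> In i xs -> In j xs ->
  cdist (ef_bound k) (proj1_sig (v i)) (proj1_sig (v j)) =
  cdist (ef_bound k) (proj1_sig (w i)) (proj1_sig (w j)).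
Proof.
  intros HR Hi Hj.
  exact (HR (_, _) (_, _) (in_cons _ _ _ (in_cons _ _ _ (in_map _ _ _ Hi)))
            (in_cons _ _ _ (in_cons _ _ _ (in_map _ _ _ Hj)))).
Qed.

Lemma interval_ef f : forall k v w, incl (vars f) xs -> (qdepth f <= k)%nat ->
  ef_related k v w -> (sat M1 v f <-> sat M2 w f).
Proof.
  induction f; intros k v w Hxs Hk HR; cbn [sat vars qdepth] in *;
    pose proof (ef_bound_ge1 k) as HK.
  - cbn. rewrite !(cdist_gt0 _ HK), (ef_related_cdist k v w n n0 HR); try tauto;
      apply Hxs; cbn; tauto.
  - cbn. rewrite !interval_eq, !(cdist_eq0 _ HK).
    rewrite (ef_related_cdist k v w n n0 HR); try tauto; apply Hxs; cbn; tauto.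
  - tauto.
  - rewrite (IHf k v w); auto; tauto.
  - apply incl_app_inv in Hxs as [? ?].
    rewrite (IHf1 k v w), (IHf2 k v w); auto; try lia; tauto.
  - apply incl_app_inv in Hxs as [? ?].
    rewrite (IHf1 k v w), (IHf2 k v w); auto; try lia; tauto.
  - apply incl_app_inv in Hxs as [? ?].
    rewrite (IHf1 k v w), (IHf2 k v w); auto; try lia; tauto.
  - destruct k as [|k]; [lia|]. apply incl_cons_inv in Hxs as [_ Hxs].
    split; intros Hall a.
    + destruct (ef_related_back k v w n a HR) as [a' Ha'].
      rewrite <- (IHf k (upd v n a') (upd w n a)); auto; lia.
    + destruct (ef_related_forth k v w n a HR) as [b' Hb'].
      rewrite (IHf k (upd v n a) (upd w n b')); auto; lia.
  - destruct k as [|k]; [lia|]. apply incl_cons_inv in Hxs as [_ Hxs].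
    split; intros [a Ha].
    + destruct (ef_related_forth k v w n a HR) as [b' Hb'].
      exists b'. rewrite <- (IHf k (upd v n a) (upd w n b')); auto; lia.
    + destruct (ef_related_back k v w n a HR) as [a' Ha'].
      exists a'. rewrite (IHf k (upd v n a') (upd w n a)); auto; lia.
Qed.
End EhrenfeuchtFraisse.

Definition chain_start : point := (false, (-1)%Z).
Definition origin : point := (false, 0%Z).

Lemma origin_in_chain K : (1 <= K)%Z -> point_lt chain_start origin /\ point_lt origin (false, K).
Proof. unfold point_lt; cbn; lia. Qed.

Lemma origin_in_omega : point_lt chain_start origin /\ point_lt origin (true, 0%Z).
Proof. unfold point_lt; cbn; lia. Qed.

Definition chain_origin (k : nat) : {p | point_lt chain_start p /\ point_lt p (false, ef_bound k)} :=
  exist _ origin (origin_in_chain _ (ef_bound_ge1 k)).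

(* The chain [0 < 1 < ... < 2^k - 1]. *)
Definition finite_chain (k : nat) : model :=
  interval chain_start (false, ef_bound k) (inhabits (chain_origin k)).

Definition omega_origin : {p | point_lt chain_start p /\ point_lt p (true, 0%Z)} :=
  exist _ origin origin_in_omega.

(* The order type omega + omega*: [(false, n)] for [n >= 0], then [(true, z)] for [z < 0]. *)
Definition omega_omega_star : model :=
  interval chain_start (true, 0%Z) (inhabits omega_origin).

Section FiniteChain.
Variable k : nat.
Let K := ef_bound k.

Lemma finite_chain_point (p : dom (finite_chain k)) :
  exists z, proj1_sig p = (false, z) /\ (0 <= z < K)%Z.
Proof.
  destruct p as [[[|] z] [P1 P2]]; unfold point_lt, chain_start in *; cbn in *;
    [lia|exists z; split; auto; lia].
Qed.

Lemma finite_chain_max_within m : forall (p : dom (finite_chain k)) z,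
  proj1_sig p = (false, z) -> (K - 1 - Z.of_nat m <= z)%Z -> max_within (finite_chain k) p m.
Proof.
  assert (Hmax : forall (p : dom (finite_chain k)) z,
            proj1_sig p = (false, z) -> (K - 1 <= z)%Z -> is_max _ p).
  { intros p z Ep Hz q Hq. destruct (finite_chain_point q) as [z' [Eq Hz']].
    cbn in Hq. rewrite Ep, Eq in Hq. unfold point_lt in Hq; cbn in Hq. lia. }
  induction m as [|m IH]; intros p z Ep Hz; cbn [max_within].
  { apply (Hmax p z); auto; lia. }
  destruct (Z.le_gt_cases (K - 1) z) as [Hk|Hk]; [left; now apply (Hmax p z)|right].
  destruct (finite_chain_point p) as [z0 [E0 H0]]. rewrite Ep in E0. injection E0 as <-.
  assert (Hnext : point_lt chain_start (false, (z + 1)%Z) /\ point_lt (false, (z + 1)%Z) (false, K))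
    by (unfold point_lt, chain_start; cbn; lia).
  exists (exist _ (false, (z + 1)%Z) Hnext). split.
  - split; cbn.
    + rewrite Ep. unfold point_lt; cbn; lia.
    + intros q [Q1 Q2]. destruct (finite_chain_point q) as [z' [Eq _]].
      rewrite Ep, Eq in Q1. rewrite Eq in Q2. unfold point_lt in *; cbn in *. lia.
  - apply (IH _ (z + 1)%Z); cbn; auto. lia.
Qed.

Lemma finite_chain_not_theta_phi : ~ theta_phi (finite_chain k).
Proof.
  intros Hth. apply (theta_phi_not_small _ (Z.to_nat K) Hth). split; [apply linear_order_interval|].
  exists (chain_origin k). split.
  - intros q Hq. destruct (finite_chain_point q) as [z [Eq Hz]].
    cbn in Hq. rewrite Eq in Hq. unfold point_lt, origin in Hq; cbn in Hq. lia.
  - apply (finite_chain_max_within _ _ 0%Z); auto. pose proof (ef_bound_ge1 k). fold K. lia.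
Qed.
End FiniteChain.

Lemma omega_omega_star_theta_phi : theta_phi omega_omega_star.
Proof.
  apply (theta_phi_of_no_max_subset omega_omega_star (fun p => fst (proj1_sig p) = false)).
  { now exists omega_origin. }
  intros [[s z] [Q1 Q2]] Hs. cbn in Hs. subst s.
  assert (Hnext : point_lt chain_start (false, (z + 1)%Z) /\ point_lt (false, (z + 1)%Z) (true, 0%Z))
    by (unfold point_lt, chain_start in *; cbn in *; lia).
  exists (exist _ (false, (z + 1)%Z) Hnext). split; [reflexivity|].
  cbn. unfold point_lt; cbn; lia.
Qed.

(* Both orders are seen from their two endpoints and [origin]: the three matched pairs are
   at clamped distance [0] or [±2^k] from each other in either order. *)
Lemma finite_chain_of_omega_omega_star chi :
  sentence chi -> models omega_omega_star chi -> models (finite_chain (qdepth chi)) chi.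
Proof.
  intros Hs HG. set (k := qdepth chi).
  apply (models_of_sentence (finite_chain k) chi (fun _ => chain_origin k) Hs).
  refine (proj2 (interval_ef _ _ _ _ _ _ (vars chi) chi k _ (fun _ => omega_origin)
                   (incl_refl _) (le_n _) _) (HG _)).
  assert (Hpairs : forall x, In x (ef_pairs chain_start (false, ef_bound k) chain_start (true, 0%Z)
                                    (inhabits (chain_origin k)) (inhabits omega_origin) (vars chi)
                                    (fun _ => chain_origin k) (fun _ => omega_origin)) ->
             x = (chain_start, chain_start) \/ x = ((false, ef_bound k), (true, 0%Z)) \/
             x = (origin, origin)).
  { intros x [<-|[<-|Hx]]; auto. apply in_map_iff in Hx as [i [<- _]]. auto. }
  pose proof (ef_bound_ge1 k).
  intros x y Hx Hy.
  destruct (Hpairs x Hx) as [-> | [-> | ->]]; destruct (Hpairs y Hy) as [-> | [-> | ->]];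
    unfold cdist, clamp, chain_start, origin; cbn [fst snd Bool.eqb]; lia.
Qed.

Theorem proposition1 :
  exists phi : form,
    sentence phi /\
    (exists T : form -> Prop, expressible_by_theory phi T) /\
    ~ (exists chi : form, expressible_by_sentence phi chi).
Proof.
  exists nonlinear_or_unbounded. split; [exact sentence_nonlinear_or_unbounded|split].
  - exists not_finite_linear_order. split.
    + intros f [n ->]. apply sentence_not_small_linear_order_form.
    + apply theta_phi_iff_not_finite.
  - intros [chi [Hs Hchi]].
    apply (finite_chain_not_theta_phi (qdepth chi)), Hchi.
    apply finite_chain_of_omega_omega_star; [exact Hs|].
    apply Hchi, omega_omega_star_theta_phi.
Qed.
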